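(* Let $\mathcal{X}$ be a nonempty convex subset of $\mathbb{R}^n$ and $\mathbf{F}:\mathcal{X}\to I(\mathbb{R})$ a convex interval-valued function. If $\mathbf{F}$ is $gH$-differentiable at $\bar{x}\in\mathcal{X}$, then $\partial\mathbf{F}(\bar{x})=\{\nabla\mathbf{F}(\bar{x})\}$.
   Context: $I(\mathbb{R})$: nonempty compact intervals $\mathbf{A}=[\underline{a},\overline{a}]$; $\mathbf{A}\oplus\mathbf{B}=[\underline{a}+\underline{b},\overline{a}+\overline{b}]$; $\lambda\odot\mathbf{A}=[\min\{\lambda\underline{a},\lambda\overline{a}\},\max\{\lambda\underline{a},\lambda\overline{a}\}]$; $\mathbf{A}\ominus_{gH}\mathbf{B}=[\min\{\underline{a}-\underline{b},\overline{a}-\overline{b}\},\max\{\underline{a}-\underline{b},\overline{a}-\overline{b}\}]$; $\mathbf{0}=[0,0]$; $\mathbf{A}\preceq\mathbf{B}$ iff $\underline{a}\le\underline{b}$ and $\overline{a}\le\overline{b}$; limits w.r.t. $\|\mathbf{A}\|_{I(\mathbb{R})}=\max\{|\underline{a}|,|\overline{a}|\}$. $d^T\odot\widehat{\mathbf{A}}=\bigoplus_{i}d_i\odot\mathbf{A}_i$ for $d\in\mathbb{R}^n$, $\widehat{\mathbf{A}}\in I(\mathbb{R})^n$. Convex IVF: $\mathbf{F}(\lambda x_1+(1-\lambda)x_2)\preceq\lambda\odot\mathbf{F}(x_1)\oplus(1-\lambda)\odot\mathbf{F}(x_2)$. $gH$-derivative of a one-variable IVF: $\mathbf{G}'(t)=\lim_{s\to0}\frac1s\odot(\mathbf{G}(t+s)\ominus_{gH}\mathbf{G}(t))$;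 $D_i\mathbf{F}(\bar{x})$ is the $gH$-derivative at $\bar{x}_i$ of $x_i\mapsto\mathbf{F}(\bar{x}_1,\dots,x_i,\dots,\bar{x}_n)$; $\nabla\mathbf{F}(\bar{x})=(D_1\mathbf{F}(\bar{x}),\dots,D_n\mathbf{F}(\bar{x}))^T$. $\mathbf{F}$ is $gH$-differentiable at $\bar{x}$ if there exist $\widehat{\mathbf{A}}\in I(\mathbb{R})^n$, an interval-valued $\mathbf{E}(\mathbf{F}(\bar{x});d)\to\mathbf{0}$ as $\|d\|\to0$, and $\delta>0$ with $\mathbf{F}(\bar{x}+d)\ominus_{gH}\mathbf{F}(\bar{x})=d^T\odot\widehat{\mathbf{A}}\oplus\|d\|\odot\mathbf{E}(\mathbf{F}(\bar{x});d)$ for $\|d\|<\delta$. $gH$-subgradient at $\bar{x}$: $\widehat{\mathbf{G}}\in I(\mathbb{R})^n$ with $(x-\bar{x})^T\odot\widehat{\mathbf{G}}\preceq\mathbf{F}(x)\ominus_{gH}\mathbf{F}(\bar{x})$ for all $x\in\mathcal{X}$; $\partial\mathbf{F}(\bar{x})$ is the set of all of them. *)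

From mathcomp Require Import all_boot all_order all_algebra.
From mathcomp Require Import reals.
Set Implicit Arguments. Unset Strict Implicit. Unset Printing Implicit Defensive.
Import Order.TTheory GRing.Theory Num.Theory.
Local Open Scope ring_scope.

Section IntervalArith.
Variable R : realType.

Record itv := Itv { ilo : R; ihi : R; ileq : ilo <= ihi }.

Lemma min_le_max (a b : R) : Order.min a b <= Order.max a b.
Proof. by case: (leP a b) => h //; rewrite ltW. Qed.

Definition itv_mm (a b : R) : itv := Itv (min_le_max a b).

Definition izero : itv := Itv (lexx (0 : R)).

Definition iadd (A B : itv) : itv := Itv (lerD (ileq A) (ileq B)).

Definition iscale (l : R) (A : itv) : itv := itv_mm (l * ilo A) (l * ihi A).

Definition igH (A B : itv) : itv := itv_mm (ilo A - ilo B) (ihi A - ihi B).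

Definition inorm (A : itv) : R := Order.max `|ilo A| `|ihi A|.

Definition ile (A B : itv) : Prop := ilo A <= ilo B /\ ihi A <= ihi B.

End IntervalArith.

Arguments izero {R}.

Section IVF.
Variables (R : realType) (n : nat).
Notation vec := 'rV[R]_n.

Definition enorm (d : vec) : R := Num.sqrt (\sum_(i < n) d ord0 i ^+ 2).

Definition idot (d : vec) (A : 'I_n -> itv R) : itv R :=
  \big[@iadd R/izero]_(i < n) iscale (d ord0 i) (A i).

Definition convex_set (X : vec -> Prop) : Prop :=
  forall x1 x2 (l : R), X x1 -> X x2 -> 0 <= l <= 1 ->
    X (l *: x1 + (1 - l) *: x2).

Definition convex_ivf (X : vec -> Prop) (F : vec -> itv R) : Prop :=
  forall x1 x2 (l : R), X x1 -> X x2 -> 0 <= l <= 1 ->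
    ile (F (l *: x1 + (1 - l) *: x2))
        (iadd (iscale l (F x1)) (iscale (1 - l) (F x2))).

Definition gH_differentiable (X : vec -> Prop) (F : vec -> itv R) (xb : vec)
  : Prop :=
  exists (Ahat : 'I_n -> itv R) (E : vec -> itv R) (delta : R),
    [/\ 0 < delta,
        (forall eps : R, 0 < eps -> exists eta : R, 0 < eta /\
           forall d : vec, 0 < enorm d < eta -> inorm (E d) < eps)
      & forall d : vec, enorm d < delta ->
          X (xb + d) /\
          igH (F (xb + d)) (F xb) = iadd (idot d Ahat) (iscale (enorm d) (E d))].

Definition gH_partial (X : vec -> Prop) (F : vec -> itv R) (xb : vec)
  (i : 'I_n) (A : itv R) : Prop :=
  forall eps : R, 0 < eps -> exists eta : R, 0 < eta /\
    forall s : R, 0 < `|s| < eta -> X (xb + s *: delta_mx ord0 i) ->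
      inorm (igH (iscale s^-1 (igH (F (xb + s *: delta_mx ord0 i)) (F xb))) A)
        < eps.

Definition gH_gradient (X : vec -> Prop) (F : vec -> itv R) (xb : vec)
  (g : 'I_n -> itv R) : Prop :=
  forall i, gH_partial X F xb i (g i).

Definition gH_subgradient (X : vec -> Prop) (F : vec -> itv R) (xb : vec)
  (G : 'I_n -> itv R) : Prop :=
  forall x, X x -> ile (idot (x - xb) G) (igH (F x) (F xb)).

End IVF.

(* The expansion F(xb + d) -gH F(xb) = d^T (.) A (+) ||d|| (.) E(d) taken along
   d = s e_i shows that A is the gH-gradient.  Convexity gives
   F(xb + t (x - xb)) -gH F(xb) <= t (.) (F(x) -gH F(xb)) for t in (0, 1];
   dividing the expansion at d = t (x - xb) by t and letting t -> 0 shows that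
   A is a gH-subgradient.  Conversely, testing a subgradient G at xb + s e_i and
   xb - s e_i bounds G_i above and below by difference quotients, which both
   tend to the i-th partial derivative; hence every subgradient equals every
   gradient, which also makes the gradient unique. *)

From mathcomp Require Import all_boot all_order all_algebra.
From mathcomp Require Import reals boolp ring lra.
Set Implicit Arguments. Unset Strict Implicit. Unset Printing Implicit Defensive.
Import Order.TTheory GRing.Theory Num.Theory.
Local Open Scope ring_scope.

Section IntervalFacts.
Variable R : realType.
Implicit Types (A B D P : itv R) (s t : R).

Lemma itv_ext A B : ilo A = ilo B -> ihi A = ihi B -> A = B.
Proof.
case: A B => a1 a2 ha [b1 b2 hb] /= e1 e2; subst.
by rewrite (eq_irrelevance ha hb).
Qed.

Lemma ilo_iadd A B : ilo (iadd A B) = ilo A + ilo B. Proof. by []. Qed.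

Lemma ihi_iadd A B : ihi (iadd A B) = ihi A + ihi B. Proof. by []. Qed.

Lemma ilo_igH A B : ilo (igH A B) = Order.min (ilo A - ilo B) (ihi A - ihi B).
Proof. by []. Qed.

Lemma ihi_igH A B : ihi (igH A B) = Order.max (ilo A - ilo B) (ihi A - ihi B).
Proof. by []. Qed.

Lemma ile_anti A B : ile A B -> ile B A -> A = B.
Proof. by move=> [? ?] [? ?]; apply: itv_ext; apply/le_anti/andP. Qed.

Lemma ilo_iscale_ge0 s A : 0 <= s -> ilo (iscale s A) = s * ilo A.
Proof. by move=> s_ge0; rewrite /= min_l // ler_wpM2l // ileq. Qed.

Lemma ihi_iscale_ge0 s A : 0 <= s -> ihi (iscale s A) = s * ihi A.
Proof. by move=> s_ge0; rewrite /= max_r // ler_wpM2l // ileq. Qed.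

Lemma ilo_iscale_le0 s A : s <= 0 -> ilo (iscale s A) = s * ihi A.
Proof. by move=> s_le0; rewrite /= min_r // ler_wnM2l // ileq. Qed.

Lemma ihi_iscale_le0 s A : s <= 0 -> ihi (iscale s A) = s * ilo A.
Proof. by move=> s_le0; rewrite /= max_l // ler_wnM2l // ileq. Qed.

Lemma iscaleDr t A B : 0 <= t -> iscale t (iadd A B) = iadd (iscale t A) (iscale t B).
Proof.
by move=> t_ge0; apply: itv_ext;
  rewrite ?ilo_iadd ?ihi_iadd ?ilo_iscale_ge0 ?ihi_iscale_ge0 // mulrDr.
Qed.

Lemma iscaleA s t A : 0 <= s -> 0 <= t -> iscale s (iscale t A) = iscale (s * t) A.
Proof.
move=> s_ge0 t_ge0; have st_ge0 := mulr_ge0 s_ge0 t_ge0.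
by apply: itv_ext; rewrite ?ilo_iscale_ge0 ?ihi_iscale_ge0 // mulrA.
Qed.

Lemma iscale1 A : iscale 1 A = A.
Proof. by apply: itv_ext; rewrite ?ilo_iscale_ge0 ?ihi_iscale_ge0 // mul1r. Qed.

Lemma inorm_iscale t A : 0 <= t -> inorm (iscale t A) = t * inorm A.
Proof.
move=> t_ge0; rewrite /inorm ilo_iscale_ge0 // ihi_iscale_ge0 //.
by rewrite !normrM ger0_norm // maxr_pMr.
Qed.

Lemma igH_iaddl A B : igH (iadd A B) A = B.
Proof.
by apply: itv_ext; rewrite /= (addrAC (ilo A)) (addrAC (ihi A)) !subrr !add0r
  ?min_l ?max_r // ileq.
Qed.

Lemma inorm_igH_lt A B e :
  inorm (igH A B) < e <-> `|ilo A - ilo B| < e /\ `|ihi A - ihi B| < e.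
Proof.
rewrite /inorm gt_max /=; case: (leP (ilo A - ilo B) (ihi A - ihi B)) => _.
  by split => [/andP[] | [] -> ->].
by split => [/andP[] -> -> | [] -> ->].
Qed.

Lemma ile_approx_r A B :
  (forall e, 0 < e -> exists P, ile A P /\ inorm (igH P B) < e) -> ile A B.
Proof.
move=> approx; split; apply/ler_addgt0Pr => e /approx
  [P [[loAP hiAP] /inorm_igH_lt [/ltr_normlP [_ loPB] /ltr_normlP [_ hiPB]]]]; lra.
Qed.

Lemma ile_approx_l A B :
  (forall e, 0 < e -> exists P, ile P B /\ inorm (igH P A) < e) -> ile A B.
Proof.
move=> approx; split; apply/ler_addgt0Pr => e /approx
  [P [[loPB hiPB] /inorm_igH_lt [/ltr_normlP [loPA _] /ltr_normlP [hiPA _]]]]; lra.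
Qed.

Lemma ile_igHl A A' B : ile A A' -> ile (igH A B) (igH A' B).
Proof. by move=> [lo hi]; split; [apply: le_min2 | apply: le_max2]; rewrite lerD2r. Qed.

Lemma ile_iscale2l t A B : 0 < t -> ile (iscale t A) (iscale t B) -> ile A B.
Proof.
move=> t_gt0; have t_ge0 := ltW t_gt0.
by rewrite /ile !ilo_iscale_ge0 // !ihi_iscale_ge0 // !ler_pM2l.
Qed.

Lemma ile_iscale_gt0 s A D : 0 < s -> ile (iscale s A) D -> ile A (iscale s^-1 D).
Proof.
move=> s_gt0; have s_ge0 := ltW s_gt0.
have si_ge0 : 0 <= s^-1 by rewrite invr_ge0.
rewrite /ile ilo_iscale_ge0 // ihi_iscale_ge0 // => -[lo hi].
by rewrite ilo_iscale_ge0 // ihi_iscale_ge0 // !ler_pdivlMl.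
Qed.

Lemma ile_iscale_lt0 s A D : s < 0 -> ile (iscale s A) D -> ile (iscale s^-1 D) A.
Proof.
move=> s_lt0; have s_le0 := ltW s_lt0.
have si_le0 : s^-1 <= 0 by rewrite invr_le0.
rewrite /ile ilo_iscale_le0 // ihi_iscale_le0 // => -[lo hi].
by rewrite ilo_iscale_le0 // ihi_iscale_le0 // !ler_ndivrMl.
Qed.

Lemma igH_convex_comb t A B : 0 <= t <= 1 ->
  igH (iadd (iscale t A) (iscale (1 - t) B)) B = iscale t (igH A B).
Proof.
case/andP=> t_ge0 t_le1; have t'_ge0 : 0 <= 1 - t by rewrite subr_ge0.
apply: itv_ext; rewrite ?ilo_igH ?ihi_igH ilo_iadd ihi_iadd
  !ilo_iscale_ge0 // !ihi_iscale_ge0 // ?minr_pMr ?maxr_pMr //.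
- by congr Order.min; ring.
- by congr Order.max; ring.
Qed.

Lemma inorm_igH_quot s A D : s != 0 ->
  inorm (igH (iscale s^-1 (iadd (iscale s A) (iscale `|s| D))) A) = inorm D.
Proof.
move=> s_neq0; have [s_lt0|s_gt0|s_eq0] := ltgtP s 0; last 2 first.
- rewrite gtr0_norm // -iscaleDr ?ltW // iscaleA ?invr_ge0 ?ltW //.
  by rewrite mulVf // iscale1 igH_iaddl.
- by rewrite s_eq0 eqxx in s_neq0.
have [s_le0 si_le0] : s <= 0 /\ s^-1 <= 0 by rewrite invr_le0 ltW.
have ns_ge0 : 0 <= - s by rewrite oppr_ge0.
set Q := iscale s^-1 _.
have loQ : ilo Q = ilo A - ihi D.
  rewrite ilo_iscale_le0 // ihi_iadd ihi_iscale_le0 // ihi_iscale_ge0 ltr0_norm //.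
  by field.
have hiQ : ihi Q = ihi A - ilo D.
  rewrite ihi_iscale_le0 // ilo_iadd ilo_iscale_le0 // ilo_iscale_ge0 ltr0_norm //.
  by field.
rewrite /inorm ilo_igH ihi_igH loQ hiQ (addrAC (ilo A)) (addrAC (ihi A)) !subrr !add0r.
have hiD_loD : - ihi D <= - ilo D by rewrite lerN2 ileq.
by rewrite (min_l hiD_loD) (max_r hiD_loD) !normrN maxC.
Qed.

End IntervalFacts.

Section VectorFacts.
Variables (R : realType) (n : nat).
Implicit Types (d : 'rV[R]_n) (A : 'I_n -> itv R) (s t : R).

Lemma enorm_ge0 d : 0 <= enorm d.
Proof. exact: sqrtr_ge0. Qed.

Lemma enormZ t d : enorm (t *: d) = `|t| * enorm d.
Proof.
rewrite /enorm; under eq_bigr do rewrite mxE exprMn.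
by rewrite -mulr_sumr sqrtrM ?sqr_ge0 // sqrtr_sqr.
Qed.

Lemma enorm_delta i : enorm (delta_mx ord0 i : 'rV[R]_n) = 1.
Proof.
rewrite /enorm (bigD1 i) //= mxE !eqxx expr1n big1 ?addr0 ?sqrtr1 //.
by move=> j /negbTE ji; rewrite mxE ji expr0n.
Qed.

Lemma ilo_idot d A : ilo (idot d A) = \sum_(i < n) ilo (iscale (d ord0 i) (A i)).
Proof. by rewrite /idot (big_morph (@ilo R) (id1 := 0) (op1 := +%R)). Qed.

Lemma ihi_idot d A : ihi (idot d A) = \sum_(i < n) ihi (iscale (d ord0 i) (A i)).
Proof. by rewrite /idot (big_morph (@ihi R) (id1 := 0) (op1 := +%R)). Qed.

Lemma idotZ t d A : 0 <= t -> idot (t *: d) A = iscale t (idot d A).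
Proof.
move=> t_ge0; apply: itv_ext.
  rewrite ilo_iscale_ge0 // !ilo_idot mulr_sumr.
  by apply: eq_bigr => i _; rewrite /= mxE -!mulrA minr_pMr.
rewrite ihi_iscale_ge0 // !ihi_idot mulr_sumr.
by apply: eq_bigr => i _; rewrite /= mxE -!mulrA maxr_pMr.
Qed.

Lemma idot_delta s i A : idot (s *: delta_mx ord0 i) A = iscale s (A i).
Proof.
have coord j : (s *: delta_mx ord0 i : 'rV[R]_n) ord0 j = if j == i then s else 0.
  by rewrite !mxE eqxx /=; case: eqP; rewrite ?mulr1 ?mulr0.
apply: itv_ext; rewrite ?ilo_idot ?ihi_idot (bigD1 i) //= coord eqxx big1 ?addr0 //;
  by move=> j /negbTE ji; rewrite coord ji /= !mul0r ?minxx ?maxxx.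
Qed.

End VectorFacts.

Section SubgradientIsGradient.
Variables (R : realType) (n : nat) (X : 'rV[R]_n -> Prop) (F : 'rV[R]_n -> itv R).
Variables (xb : 'rV[R]_n) (r : R).
Hypotheses (r_gt0 : 0 < r) (ball_in_X : forall d, enorm d < r -> X (xb + d)).

Local Notation axis s i := (s *: delta_mx ord0 i : 'rV[R]_n).
Local Notation quot s i := (iscale s^-1 (igH (F (xb + axis s i)) (F xb))).

Lemma gH_subgradient_eq_gradient g G :
  gH_gradient X F xb g -> gH_subgradient X F xb G -> G = g.
Proof.
move=> grad sub; apply: funext => i.
have sub_axis s : `|s| < r -> ile (iscale s (G i)) (igH (F (xb + axis s i)) (F xb)).
  move=> s_r; have X_s : X (xb + axis s i).
    by apply: ball_in_X; rewrite enormZ enorm_delta mulr1.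
  by have := sub _ X_s; rewrite (addrC xb) addrK idot_delta.
have quot_near e : 0 < e -> exists2 s, 0 < s &
    forall s', `|s'| = s -> `|s'| < r /\ inorm (igH (quot s' i) (g i)) < e.
  move=> /(grad i) [eta [eta_gt0 near_g]].
  set m := Order.min eta r.
  have m_gt0 : 0 < m by rewrite lt_min eta_gt0.
  have [m_eta m_r] : m <= eta /\ m <= r by rewrite !ge_min !lexx orbT.
  exists (m / 2) => [|s' s'E]; first by rewrite divr_gt0.
  have s'_eta : `|s'| < eta by lra.
  have s'_r : `|s'| < r by lra.
  split=> //; apply: near_g; first by rewrite s'_eta andbT s'E divr_gt0.
  by apply: ball_in_X; rewrite enormZ enorm_delta mulr1.
apply: ile_anti.
- apply: ile_approx_r => e /quot_near [s s_gt0 near_s].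
  have [s_r close] := near_s s (gtr0_norm s_gt0).
  by exists (quot s i); split => //; apply: ile_iscale_gt0 => //; apply: sub_axis.
- apply: ile_approx_l => e /quot_near [s s_gt0 near_s].
  have ns_s : `|- s| = s by rewrite normrN gtr0_norm.
  have [s_r close] := near_s _ ns_s.
  exists (quot (- s) i); split => //.
  by apply: ile_iscale_lt0; rewrite ?oppr_lt0 //; apply: sub_axis.
Qed.

End SubgradientIsGradient.

Lemma small_scale_factor (R : realFieldType) (c m : R) : 0 < c -> 0 < m ->
  exists2 t, 0 < t <= 1 & t * c < m.
Proof.
move=> c_gt0 m_gt0; exists (Order.min 1 (m / (2 * c))).
  by rewrite lt_min ltr01 !divr_gt0 ?mulr_gt0 //= ge_min lexx.
have t_le : Order.min 1 (m / (2 * c)) <= m / (2 * c) by rewrite ge_min lexx orbT.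
have : m / (2 * c) * c = m / 2 by field; rewrite gt_eqF.
have := ler_wpM2r (ltW c_gt0) t_le; lra.
Qed.

Section Expansion.
Variables (R : realType) (n : nat) (X : 'rV[R]_n -> Prop) (F : 'rV[R]_n -> itv R).
Variables (xb : 'rV[R]_n) (A : 'I_n -> itv R) (E : 'rV[R]_n -> itv R) (delta : R).
Hypotheses (delta_gt0 : 0 < delta)
  (E_cvg0 : forall e : R, 0 < e -> exists eta : R, 0 < eta /\
     forall d : 'rV[R]_n, 0 < enorm d < eta -> inorm (E d) < e)
  (expansion : forall d : 'rV[R]_n, enorm d < delta ->
     igH (F (xb + d)) (F xb) = iadd (idot d A) (iscale (enorm d) (E d))).

Lemma expansion_gH_gradient : gH_gradient X F xb A.
Proof.
move=> i e /E_cvg0 [eta [eta_gt0 small_E]].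
exists (Order.min eta delta); split=> [|s /andP[s_gt0]]; first by rewrite lt_min eta_gt0.
rewrite lt_min => /andP[s_eta s_delta] _.
have norm_s : enorm (s *: delta_mx ord0 i : 'rV[R]_n) = `|s|.
  by rewrite enormZ enorm_delta mulr1.
rewrite expansion norm_s // idot_delta inorm_igH_quot -?normr_gt0 //.
by apply: small_E; rewrite norm_s s_gt0.
Qed.

Lemma convex_expansion_gH_subgradient :
  convex_ivf X F -> X xb -> gH_subgradient X F xb A.
Proof.
move=> conv X_xb x X_x; set d := x - xb.
have chord t : 0 < t <= 1 -> t * enorm d < delta ->
    ile (iadd (idot d A) (iscale (enorm d) (E (t *: d)))) (igH (F x) (F xb)).
  case/andP=> t_gt0 t_le1 td_delta; have t_ge0 := ltW t_gt0.
  apply: (ile_iscale2l t_gt0).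
  have norm_td : t * enorm d = enorm (t *: d) by rewrite enormZ ger0_norm.
  rewrite iscaleDr // iscaleA ?enorm_ge0 // -idotZ // norm_td -expansion -?norm_td //.
  rewrite -igH_convex_comb ?t_ge0 //.
  have -> : xb + t *: d = t *: x + (1 - t) *: xb.
    by rewrite /d scalerBr scalerBl scale1r addrCA.
  by apply: ile_igHl; apply: conv; rewrite ?t_ge0.
apply: ile_approx_l => e e_gt0.
have [t t01 [td_delta E_small]] : exists2 t, 0 < t <= 1 &
    t * enorm d < delta /\ enorm d * inorm (E (t *: d)) < e.
  have [d0|d_neq0] := eqVneq (enorm d) 0.
    by exists 1; rewrite ?ltr01 ?lexx // d0 mulr0 mul0r.
  have nd_gt0 : 0 < enorm d by rewrite lt_def d_neq0 enorm_ge0.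
  have [eta [eta_gt0 small_E]] := E_cvg0 (divr_gt0 e_gt0 nd_gt0).
  set m := Order.min eta delta.
  have m_gt0 : 0 < m by rewrite lt_min eta_gt0.
  have [m_eta m_delta] : m <= eta /\ m <= delta by rewrite !ge_min !lexx orbT.
  have [t /andP[t_gt0 t_le1] td_m] := small_scale_factor nd_gt0 m_gt0.
  exists t; first by rewrite t_gt0.
  split; first by lra.
  rewrite -ltr_pdivlMl // mulrC; apply: small_E.
  by rewrite enormZ gtr0_norm // mulr_gt0 //=; lra.
exists (iadd (idot d A) (iscale (enorm d) (E (t *: d)))).
by split; [apply: chord | rewrite igH_iaddl inorm_iscale ?enorm_ge0].
Qed.

End Expansion.

Theorem mainTheorem6 (R : realType) (n : nat) (X : 'rV[R]_n -> Prop)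
  (F : 'rV[R]_n -> itv R) (xb : 'rV[R]_n) :
  (exists x, X x) ->
  convex_set X ->
  convex_ivf X F ->
  X xb ->
  gH_differentiable X F xb ->
  exists g : 'I_n -> itv R,
    gH_gradient X F xb g /\
    (forall g', gH_gradient X F xb g' ->
       forall G, gH_subgradient X F xb G <-> G = g').
Proof.
move=> _ _ conv X_xb [A [E [delta [delta_gt0 E_cvg0 expand]]]].
have ball_in_X d : enorm d < delta -> X (xb + d) by case/expand.
have expansion d : enorm d < delta ->
    igH (F (xb + d)) (F xb) = iadd (idot d A) (iscale (enorm d) (E d)).
  by case/expand.
have sub_A := convex_expansion_gH_subgradient delta_gt0 E_cvg0 expansion conv X_xb.
exists A; split; first exact: expansion_gH_gradient _ delta_gt0 E_cvg0 expansion.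
have subgradient_eq := gH_subgradient_eq_gradient (F := F) delta_gt0 ball_in_X.
move=> g' grad' G; split; first exact: subgradient_eq grad'.
by move=> ->; rewrite -(subgradient_eq _ _ grad' sub_A).
Qed.
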